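(* Let $(\mathcal{S}_1,\mathcal{S}_2)$ be an $S$-pair. Then there is at most one element $s \in S$ such that either $S - s \in \mathcal{S}_2$ or $\{t\} \in \mathcal{S}_2$ for every $t \in S - s$.
   Context: Let $S$ be a finite nonempty set and $\mathcal{S}_1, \mathcal{S}_2 \subseteq 2^S$. The pair $(\mathcal{S}_1,\mathcal{S}_2)$ is an $S$-pair if: (S1) for $i=1,2$, if $A,B \in \mathcal{S}_i$ with $B \subset A$ and $|A| = |B|+1$, then every $|B|$-element subset of $A$ lies in $\mathcal{S}_i$; (S2) for $i=1,2$, if $A,B \in \mathcal{S}_i$ with $|A|=|B|$ and $|A\cap B| = |A|-1$, then $A\cup B \in \mathcal{S}_i$; (S3) for $i=1,2$, not every singleton $\{s\}$, $s\in S$, lies in $\mathcal{S}_i$, and $S \notin \mathcal{S}_i$; (S4) for $k = 1,\dots,|S|-1$ and $x\in S$, if every $k$-element subset of $S - x$ lies in $\mathcal{S}_1$, then not every $(|S|-k)$-element subset of $S-x$ lies in $\mathcal{S}_2$. *)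

From mathcomp Require Import all_boot.
Set Implicit Arguments. Unset Strict Implicit. Unset Printing Implicit Defensive.

(* The ground set S is the finite type T (assumed nonempty); families of
   subsets of S are elements of {set {set T}}. *)

Definition S1_axiom (T : finType) (F : {set {set T}}) : Prop :=
  forall A B : {set T}, A \in F -> B \in F -> B \proper A -> #|A| = #|B| + 1 ->
    forall C : {set T}, C \subset A -> #|C| = #|B| -> C \in F.

Definition S2_axiom (T : finType) (F : {set {set T}}) : Prop :=
  forall A B : {set T}, A \in F -> B \in F -> #|A| = #|B| ->
    #|A :&: B| + 1 = #|A| -> A :|: B \in F.

Definition S3_axiom (T : finType) (F : {set {set T}}) : Prop :=
  ~ (forall s : T, [set s] \in F) /\ [set: T] \notin F.

Definition S4_axiom (T : finType) (F1 F2 : {set {set T}}) : Prop :=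
  forall (k : nat) (x : T), 1 <= k -> k <= #|T| - 1 ->
    (forall C : {set T}, C \subset [set~ x] -> #|C| = k -> C \in F1) ->
    ~ (forall C : {set T}, C \subset [set~ x] -> #|C| = #|T| - k -> C \in F2).

Definition S_pair (T : finType) (F1 F2 : {set {set T}}) : Prop :=
  [/\ S1_axiom F1 /\ S1_axiom F2,
      S2_axiom F1 /\ S2_axiom F2,
      S3_axiom F1 /\ S3_axiom F2
    & S4_axiom F1 F2].

From mathcomp Require Import all_boot.
From mathcomp Require Import zify.

Set Implicit Arguments.
Unset Strict Implicit.
Unset Printing Implicit Defensive.

(* Only axioms (S2) and (S3) for the family F2 are needed.
   The basic observation is that (S2) lets a family "glue" the two sets
   C - a and C - b (for distinct a, b in C) back into C, since they have the
   same size and meet in |C| - 2 elements (lemma S2_glue_drops).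
   Iterating this from singletons, a family satisfying (S2) that contains
   every singleton of D contains every nonempty subset of D
   (lemma S2_subsets_of_singletons).  Hence, as soon as S has a point other
   than s, either alternative in the theorem yields S - s in F2
   (lemma S2_complement_point).  If two distinct points s, s' both had the
   property, then S - s and S - s' would lie in F2, and gluing them gives
   S in F2, contradicting (S3). *)

Lemma S2_glue_drops (T : finType) (F : {set {set T}}) (C : {set T}) (a b : T) :
  S2_axiom F -> a \in C -> b \in C -> a != b ->
  C :\ a \in F -> C :\ b \in F -> C \in F.
Proof.
move=> S2 aC bC ab CaF CbF.
have bCa : b \in C :\ a by rewrite !inE eq_sym ab.
have card_Ca : #|C| = #|C :\ a| + 1 by rewrite (cardsD1 a C) aC addnC.
have card_Cb : #|C| = #|C :\ b| + 1 by rewrite (cardsD1 b C) bC addnC.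
have card_Cab : #|C :\ a| = #|C :\ a :\ b| + 1.
  by rewrite (cardsD1 b (C :\ a)) bCa addnC.
have capE : (C :\ a) :&: (C :\ b) = C :\ a :\ b.
  by apply/setP=> x; rewrite !inE; case: (x == a); case: (x == b); case: (x \in C).
have cupE : (C :\ a) :|: (C :\ b) = C.
  apply/setP=> x; rewrite !inE; case: (eqVneq x a) => [->|_] /=.
    by rewrite ab aC.
  by case: (x \in C); rewrite ?andbF ?orbF.
rewrite -cupE; apply: S2 => //; first lia.
by rewrite capE; lia.
Qed.

Lemma S2_subsets_of_singletons (T : finType) (F : {set {set T}}) (D : {set T}) :
  S2_axiom F -> (forall t, t \in D -> [set t] \in F) ->
  forall C : {set T}, C \subset D -> 0 < #|C| -> C \in F.
Proof.
move=> S2 singF C; have [n cardC] : exists n, #|C| = n by eexists.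
elim: n C cardC => [|n IH] C cardC CD C_gt0; first by rewrite cardC in C_gt0.
case: n IH cardC => [|n] IH cardC.
  have /cards1P [x Cx] : #|C| == 1 by rewrite cardC.
  by move: CD; rewrite Cx sub1set => /singF.
have /card_gt0P [a aC] : 0 < #|C| by rewrite cardC.
have card_Ca : #|C :\ a| = n.+1 by rewrite (cardsD1 a C) aC add1n in cardC; lia.
have /card_gt0P [b bCa] : 0 < #|C :\ a| by rewrite card_Ca.
move: (bCa); rewrite !inE => /andP [ba bC].
have card_Cb : #|C :\ b| = n.+1 by rewrite (cardsD1 b C) bC add1n in cardC; lia.
apply: (S2_glue_drops S2 aC bC); first by rewrite eq_sym.
- by apply: IH; rewrite ?card_Ca //; apply: subset_trans CD; apply: subD1set.
- by apply: IH; rewrite ?card_Cb //; apply: subset_trans CD; apply: subD1set.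
Qed.

Lemma S2_complement_point (T : finType) (F : {set {set T}}) (u v : T) :
  S2_axiom F -> v != u ->
  ([set~ u] \in F \/ (forall t : T, t != u -> [set t] \in F)) ->
  [set~ u] \in F.
Proof.
move=> S2 vu [// | singF].
apply: (S2_subsets_of_singletons S2 _ (subxx _)).
  by move=> t; rewrite !inE => /singF.
by apply/card_gt0P; exists v; rewrite !inE.
Qed.

Theorem mainTheorem8 (T : finType) (F1 F2 : {set {set T}}) :
  0 < #|T| -> S_pair F1 F2 ->
  forall s s' : T,
    ([set~ s] \in F2 \/ (forall t : T, t != s -> [set t] \in F2)) ->
    ([set~ s'] \in F2 \/ (forall t : T, t != s' -> [set t] \in F2)) ->
    s = s'.
Proof.
move=> _ [_ [_ S2] [_ [_ S_notin_F2]] _] s s' Hs Hs'.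
apply/eqP/negP => /negP ss'.
have s's : s' != s by rewrite eq_sym.
have compl_s : [set~ s] \in F2 by apply: (S2_complement_point S2 s's Hs).
have compl_s' : [set~ s'] \in F2 by apply: (S2_complement_point S2 ss' Hs').
have complE (u : T) : [set: T] :\ u = [set~ u] by rewrite setTD.
move/negP: S_notin_F2; apply.
by apply: (S2_glue_drops S2 (in_setT s) (in_setT s') ss'); rewrite complE.
Qed.
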